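(* Let $n\ge1$, let $z_1,\dots,z_n$ be indeterminates, and let $m_2\ge1$, $m_1\ge0$ be integers. Then \begin{align*} M(m_2,m_1,n)=\;& m_2!\,m_1!\,(n-m_1-m_2)\sum_{i=0}^{m_2}(-1)^i\,c_i\,e_{m_2-i}\,e_{m_2+m_1+i}\\ &-(m_2-1)!\,(m_1+2)!\sum_{i=0}^{m_2-1}(-1)^i\,\frac{(m_1+2+2i)(m_1+i+1)!}{i!\,(m_1+2)!}\,e_{m_2-1-i}\,e_{m_2+m_1+1+i}, \end{align*} where $c_0=1$ and $c_i=\frac{(m_1+2i)(m_1+i-1)!}{i!\,m_1!}$ for $i\ge1$.
   Context: $e_r$ is the elementary symmetric polynomial of degree $r$ in $z_1,\dots,z_n$, with $e_0=1$ and $e_r=0$ for $r>n$. For $m_2\ge1$, $m_1\ge0$, with $N=m_1+m_2+1$ and the sums running over all $N$-tuples $(b_1,\dots,b_N)$ of pairwise distinct elements of $\{1,\dots,n\}$, \[ M(m_2,m_1,n)=\sum_{b} z_{b_1}^2\cdots z_{b_{m_2}}^2\,z_{b_{m_2+1}}\cdots z_{b_{m_2+m_1}}\;-\;\sum_{b} z_{b_1}^2\cdots z_{b_{m_2-1}}^2\,z_{b_{m_2}}z_{b_{m_2+1}}\cdots z_{b_{m_2+m_1+1}}. \] *)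

From mathcomp Require Import all_boot all_algebra.
From mathcomp Require Export mpoly.
Set Implicit Arguments. Unset Strict Implicit. Unset Printing Implicit Defensive.
Import GRing.Theory.
Local Open Scope ring_scope.

Definition e (n r : nat) : {mpoly rat[n]} := mesym n rat r.

(* M(m2,m1,n): sums over N-tuples (N = m1+m2+1) of pairwise distinct
   indices in {0,..,n-1} (0-based version of {1,..,n}). *)
Definition Mpoly (m2 m1 n : nat) : {mpoly rat[n]} :=
  \sum_(b : (m1 + m2 + 1).-tuple 'I_n | uniq b)
     \prod_(j < m1 + m2 + 1)
        'X_(tnth b j) ^+ (if (j < m2)%N then 2 else if (j < m2 + m1)%N then 1 else 0)
  - \sum_(b : (m1 + m2 + 1).-tuple 'I_n | uniq b)
     \prod_(j < m1 + m2 + 1)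
        'X_(tnth b j) ^+ (if (j < m2 - 1)%N then 2 else 1).

Definition c (m1 i : nat) : rat :=
  if i == 0%N then 1
  else ((m1 + 2 * i) * (m1 + i - 1)`!)%:R / (i`! * m1`!)%:R.

Definition d (m1 i : nat) : rat :=
  ((m1 + 2 + 2 * i) * (m1 + i + 1)`!)%:R / (i`! * (m1 + 2)`!)%:R.

(* Compare the coefficients of a monomial X^m of degree D, and let K, J, Z be the numbers of
   variables with exponent 2, 1, 0 in m.  A sum over injective tuples with exponent pattern
   2^a 1^b 0^c has coefficient K^_a J^_b Z^_c (falling factorials) when D = 2a + b, while e_r e_s
   has coefficient C(J, r - K) when r + s = D and no exponent exceeds 2: the variables of
   exponent 2 occur in both factors and those of exponent 1 are shared out between them.
   Since c_(i+1) = C(M+i+1, i+1) + C(M+i, i), the alternating sum of c_i C(2t+M, t-i)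
   telescopes to [t = 0], so each alternating sum of products e e on the right-hand side
   collapses to the indicator of K = m2 (resp. K = m2 - 1, as d_i is c_i with m1 + 2 for m1),
   and these indicators match the falling factorials on the left. *)

From mathcomp Require Import all_boot all_algebra.
From mathcomp Require Import mpoly.
From mathcomp Require Import ring zify.
Set Implicit Arguments.
Unset Strict Implicit.
Unset Printing Implicit Defensive.
Import GRing.Theory Num.Theory.
Local Open Scope ring_scope.

Definition alt_binom_conv (R : comPzRingType) (a L t : nat) : R :=
  \sum_(i < t.+1) (-1) ^+ i * ('C(a + i, i) * 'C(L, t - i))%:R.

Section AltBinomConv.
Variable R : comPzRingType.
Local Notation G := (@alt_binom_conv R).

Lemma alt_binom_convn0 a L : G a L 0 = 1.
Proof. by rewrite /alt_binom_conv big_ord1 !bin0 mulr1. Qed.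

Lemma alt_binom_convS a L t : G a.+1 L t.+1 = G a L t.+1 - G a.+1 L t.
Proof.
rewrite /alt_binom_conv big_ord_recl [in X in _ = X - _]big_ord_recl /= !subn0 !addn0 !bin0.
rewrite -addrA -sumrB; congr (_ + _); apply: eq_bigr => i _.
rewrite /bump /= !add1n subSS addSn addnS binS !exprS mulnDl natrD; ring.
Qed.

Lemma alt_binom_conv0n L t : G 0 L.+1 t = 'C(L, t)%:R.
Proof.
elim: t => [|t IHt]; first by rewrite alt_binom_convn0 bin0.
suff -> : G 0 L.+1 t.+1 = 'C(L.+1, t.+1)%:R - G 0 L.+1 t by rewrite IHt binS natrD addrK.
rewrite /alt_binom_conv big_ord_recl /= subn0 bin0 mul1n expr0 mul1r -sumrN.
congr (_ + _); apply: eq_bigr => i _.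
by rewrite /bump /= !add0n !add1n !binn subSS exprS mulN1r mulNr.
Qed.

(* [G a L t] is the coefficient of [x^t] in [(1 + x)^L / (1 + x)^(a+1)]. *)
Lemma alt_binom_convE a L t : (a < L)%N -> G a L t = 'C(L - a.+1, t)%:R.
Proof.
elim: a t => [|a IHa] t aL; first by case: L aL => // L _; rewrite alt_binom_conv0n subn1.
elim: t => [|t IHt]; first by rewrite alt_binom_convn0 bin0.
rewrite alt_binom_convS IHt IHa ?(ltn_trans _ aL) //.
have -> : (L - a.+1 = (L - a.+2).+1)%N by lia.
by rewrite binS natrD addrK.
Qed.

End AltBinomConv.

Lemma cS m1 i : c m1 i.+1 = ('C(m1 + i.+1, i.+1) + 'C(m1 + i, i))%:R.
Proof.
have fact_ne0 : ((i.+1)`! * m1`!)%:R != 0 :> rat by rewrite pnatr_eq0 muln_eq0 negb_or -!lt0n !fact_gt0.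
rewrite /c /= -[RHS](mulfK fact_ne0) -natrM; congr (_%:R / _).
have binE k : ('C(m1 + k, k) * (k`! * m1`!) = (m1 + k)`!)%N.
  by rewrite -[RHS](bin_fact (leq_addl m1 k)) addnK.
rewrite [RHS]mulnDl binE.
have -> : ('C(m1 + i, i) * ((i.+1)`! * m1`!) = i.+1 * (m1 + i)`!)%N.
  by rewrite -binE factS; ring.
rewrite addnS factS subn1 /=; ring.
Qed.

Lemma d_c m1 i : d m1 i = c (m1 + 2) i.
Proof.
rewrite /d /c; case: i => [|i] /=; last by congr ((_ * _`!)%:R / _); lia.
rewrite muln0 !addn0 fact0 mul1n addn2 factS addn1 divff //.
by rewrite pnatr_eq0 muln_eq0 negb_or -!lt0n fact_gt0.
Qed.

(* By [cS] the sum splits into alternating convolutions worth [C(2t-1, t)] and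
   [C(2t-1, t-1)], which cancel. *)
Lemma sum_alt_c_binom M t :
  \sum_(i < t.+1) (-1) ^+ i * c M i * 'C(2 * t + M, t - i)%:R = (t == 0)%:R.
Proof.
case: t => [|t]; first by rewrite big_ord1 /c /= bin0 !mulr1.
rewrite big_ord_recl /= {1}/c /= subn0 expr0 !mul1r.
set L := (2 * t.+1 + M)%N.
have -> : \sum_(i < t.+1) (-1) ^+ bump 0 i * c M (bump 0 i) * 'C(L, t.+1 - bump 0 i)%:R
    = (alt_binom_conv rat M L t.+1 - 'C(L, t.+1)%:R) - alt_binom_conv rat M L t.
  rewrite /alt_binom_conv [\sum_(i < t.+2) _]big_ord_recl /= addn0 bin0 subn0 mul1n expr0 mul1r.
  rewrite [_%:R + _]addrC addrK -sumrB; apply: eq_bigr => i _.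
  rewrite /bump /= !add1n subSS cS exprS natrD; ring.
rewrite !alt_binom_convE /L; try lia.
have -> : (2 * t.+1 + M - M.+1 = (2 * t).+1)%N by lia.
have -> : 'C((2 * t).+1, t.+1) = 'C((2 * t).+1, t).
  by rewrite -bin_sub; [congr 'C(_, _); lia | lia].
ring.
Qed.

Lemma sum_alt_c_binom_trunc M q k j : (2 * k + j = 2 * q + M)%N ->
  \sum_(i < q.+1) (-1) ^+ i * c M i * ((k <= q - i) * 'C(j, q - i - k))%:R = (k == q)%:R.
Proof.
move=> deg_eq; have [kq | qk] := leqP k q; last first.
  rewrite gtn_eqF // big1 // => i _.
  by rewrite leqNgt (leq_ltn_trans (leq_subr i q) qk) mul0n mulr0.
set t := (q - k)%N; have tq : (t.+1 <= q.+1)%N by rewrite ltnS leq_subr.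
have -> : (k == q) = (t == 0)%N by apply/eqP/eqP; lia.
rewrite -(sum_alt_c_binom M t) (big_ord_widen _ (fun i => (-1) ^+ i * c M i * 'C(2 * t + M, t - i)%:R) tq).
rewrite [RHS]big_mkcond /=; apply: eq_bigr => i _; case: ifP => it.
- have -> : (k <= q - i)%N by lia.
  by rewrite mul1n; congr (_ * 'C(_, _)%:R); lia.
- have iq := ltn_ord i.
  have -> : (k <= q - i)%N = false by lia.
  by rewrite mulr0.
Qed.

Section UniqTuples.
Variables (T : finType) (f : T -> nat).

Definition uniq_tuples_on N (A : {set T}) (s : seq nat) :=
  [set t : N.-tuple T | [&& all (mem A) t, uniq t & map f t == s]].

Lemma card_uniq_tuples_on_cons N A v s :
  #|uniq_tuples_on N.+1 A (v :: s)| =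
  (\sum_(x in A | f x == v) #|uniq_tuples_on N (A :\ x) s|)%N.
Proof.
rewrite -sum1dep_card (partition_big (@thead _ _) [pred x | (x \in A) && (f x == v)]) /=; last first.
  by case/tupleP => x t; rewrite theadE /= eqseq_cons => /and3P[/andP[-> _] _ /andP[]].
apply: eq_bigr => x /andP[xA /eqP fx]; rewrite -sum1dep_card.
rewrite (reindex (fun t : N.-tuple T => [tuple of x :: t])) /=; last first.
  exists (fun t : N.+1.-tuple T => [tuple of behead t]) => [t _ | t /andP[_ /eqP <-]].
    exact: val_inj.
  by rewrite -tuple_eta.
apply: eq_bigl => t; rewrite theadE eqxx andbT /= xA fx eqseq_cons eqxx /=.
have all_setD1 (u : seq T) : all (mem (A :\ x)) u = (x \notin u) && all (mem A) u.
  elim: u => //= y u ->; rewrite !inE [y == x]eq_sym.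
  by case: (x == y); case: (y \in A); case: (x \in u).
by rewrite all_setD1; case: (x \in t); case: (all _ t).
Qed.

Lemma card_fiber_setD1 (A : {set T}) x w : x \in A ->
  #|[set y in A :\ x | f y == w]| = (#|[set y in A | f y == w]| - (f x == w))%N.
Proof.
move=> xA; rewrite [in RHS](cardsD1 x) !inE xA /=.
case: (f x == w) => /=; last first.
  by rewrite add0n subn0; apply: eq_card => y; rewrite !inE andbA; case: eqP => // ->.
by rewrite add1n subSS subn0; apply: eq_card => y; rewrite !inE andbA.
Qed.

Lemma card_uniq_tuples_on N A s K : size s = N -> all (fun v => v < K)%N s ->
  #|uniq_tuples_on N A s| =
  (\prod_(v < K) #|[set x in A | f x == v]| ^_ count_mem (v : nat) s)%N.
Proof.
elim: s N A => [|v s IHs] [|N] A //= => [_ _|[sN] /andP[vK sK]].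
  rewrite big1 => [|v _]; last exact: ffactn0.
  by rewrite (@eq_card1 _ [tuple]) // => t; rewrite [t]tuple0 inE.
rewrite card_uniq_tuples_on_cons.
under eq_bigr => x /andP[xA /eqP fx].
  rewrite (IHs N (A :\ x) sN sK).
  under eq_bigr => w _ do rewrite (card_fiber_setD1 w xA) fx.
  over.
rewrite sum_nat_const (bigD1 (Ordinal vK)) //= [in RHS](bigD1 (Ordinal vK)) //=.
rewrite eqxx add1n ffactnS subn1 mulnA; congr (_ * _ * _)%N.
- by apply: eq_card => x; rewrite !inE.
- apply: eq_bigr => w; rewrite -val_eqE /= => /negbTE wv.
  by rewrite [v == w]eq_sym wv subn0.
Qed.

End UniqTuples.

Lemma card_sets_between (T : finType) (K J : {set T}) r : [disjoint K & J] ->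
  #|[set h : {set T} | [&& #|h| == r, K \subset h & h \subset K :|: J]]| =
  ((#|K| <= r) * 'C(#|J|, r - #|K|))%N.
Proof.
move=> KJ; have [Kr | rK] := leqP #|K| r; last first.
  apply/eqP; rewrite mul0n cards_eq0; apply/eqP/setP => h; rewrite !inE.
  by apply/and3P => -[/eqP hr /subset_leq_card Kh _]; move: rK; rewrite -hr ltnNge Kh.
have disjK (S : {set T}) : S \subset J -> [disjoint S & K].
  by rewrite disjoint_sym in KJ; move/disjointWl; apply.
rewrite mul1n -cards_draws -[RHS](@card_in_imset _ _ (fun S => K :|: S)) => [|S1 S2]; last first.
  rewrite !inE => /andP[/disjK/setDidPl S1K _] /andP[/disjK/setDidPl S2K _] /(congr1 (fun S => S :\: K)).
  by rewrite !setDUl setDv !set0U S1K S2K.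
congr #|pred_of_set _|; apply/setP => h; rewrite inE; apply/and3P/imsetP => [[/eqP hr Kh hKJ] | [S]].
  exists (h :\: K); last by rewrite -{1}(setID h K) (setIidPr Kh).
  by rewrite inE subDset hKJ cardsDS // hr eqxx.
rewrite inE => /andP[SJ /eqP cardS] ->; split; rewrite ?subsetUl ?setUS //.
by rewrite cardsU disjoint_setI0 ?cards0 ?subn0 ?cardS ?subnKC // disjoint_sym disjK.
Qed.

Section ExponentClasses.
Variables (n : nat) (m : 'X_{1..n}).

Definition exp_set (v : nat) : {set 'I_n} := [set i | m i == v].
Definition exp_le2 := [forall i, (m i <= 2)%N].

Lemma card_exp_set v : #|exp_set v| = (\sum_i (m i == v))%N.
Proof. by rewrite -sum1dep_card big_mkcond; apply: eq_bigr => i _; case: (_ == _). Qed.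

Lemma mdeg_exp_sets :
  (2 * #|exp_set 2| + #|exp_set 1| + ~~ exp_le2 <= mdeg m)%N.
Proof.
have big_exp : (~~ exp_le2 <= \sum_i (2 < m i)%N)%N.
  case: (boolP exp_le2) => //= /forallPn[i]; rewrite -ltnNge => mi2.
  by rewrite (bigD1 i) //= mi2.
apply: leq_trans (leq_add (leqnn _) big_exp) _.
rewrite !card_exp_set mdegE big_distrr /= -!big_split /=; apply: leq_sum => i _.
by case: (m i) => [|[|[|k]]].
Qed.

Lemma mdeg_exp_le2 : exp_le2 -> mdeg m = (2 * #|exp_set 2| + #|exp_set 1|)%N.
Proof.
move/forallP=> m_le2; rewrite !card_exp_set mdegE big_distrr /= -big_split /=.
by apply: eq_bigr => i _; move: (m_le2 i); case: (m i) => [|[|[|k]]].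
Qed.

Lemma card_exp_le2 : exp_le2 -> n = (#|exp_set 0| + #|exp_set 1| + #|exp_set 2|)%N.
Proof.
move/forallP=> m_le2; rewrite !card_exp_set -!big_split /= -[n in LHS]card_ord -sum1_card.
by apply: eq_bigr => i _; move: (m_le2 i); case: (m i) => [|[|[|k]]].
Qed.

Lemma ffact_exp_sets a b : mdeg m = (2 * a + b)%N ->
  (#|exp_set 2| ^_ a * #|exp_set 1| ^_ b = (exp_le2 && (#|exp_set 2| == a)) * (a`! * b`!))%N.
Proof.
move=> deg_m; have := mdeg_exp_sets; have := mdeg_exp_le2; rewrite deg_m.
set K := #|exp_set 2|; set J := #|exp_set 1|.
case: (ltnP K a) => [Ka _ _ | aK].
  by rewrite ffact_small // (ltn_eqF Ka) andbF.
case: (ltnP J b) => [Jb le2_deg _ | bJ _].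
  rewrite (ffact_small Jb) muln0; case: exp_le2 le2_deg => // /(_ isT) deg_eq.
  by case: eqP => // Ka; lia.
case: exp_le2 => /= deg_le; last by exfalso; lia.
have [Ka Jb] : K = a /\ J = b by lia.
by rewrite Ka Jb eqxx !ffactnn mul1n.
Qed.

Definition mesym1_factor (h : {set 'I_n}) := [forall i, (i \in h <= m i <= (i \in h) + 1)%N].
Definition mesym1_cofactor (h : {set 'I_n}) := [set i | m i - (i \in h) == 1]%N.

Lemma mesym1D_eq h1 h2 :
  (mesym1 h1 + mesym1 h2 == m)%MM = mesym1_factor h1 && (h2 == mesym1_cofactor h1).
Proof.
rewrite /mesym1_factor /mesym1_cofactor.
apply/eqP/andP => [<- | [/forallP m_h1 /eqP ->]].
  split; first by apply/forallP => i; rewrite mnmDE !mnmE; case: (i \in h1); case: (i \in h2).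
  by apply/eqP/setP => i; rewrite inE mnmDE !mnmE; case: (i \in h1); case: (i \in h2).
apply/mnmP => i; rewrite mnmDE !mnmE inE.
by move: (m_h1 i); case: (i \in h1); case: (m i) => [|[|[|k]]].
Qed.

Lemma mesym1_factorE h :
  mesym1_factor h = [&& exp_le2, exp_set 2 \subset h & h \subset exp_set 2 :|: exp_set 1].
Proof.
apply/forallP/and3P => [m_h | [/forallP m_le2 /subsetP K_h /subsetP h_KJ] i].
  split; [apply/forallP => i | apply/subsetP => i | apply/subsetP => i];
    by move: (m_h i); rewrite ?inE; case: (i \in h); case: (m i) => [|[|[|k]]].
move: (m_le2 i) (h_KJ i) (K_h i); rewrite !inE.
case: (i \in h); case: (m i) => [|[|[|k]]] //= _; first by move/(_ isT).
by move=> _ /(_ isT).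
Qed.

Lemma card_mesym1_factor r :
  #|[set h : {set 'I_n} | (#|h| == r) && mesym1_factor h]| =
  ((exp_le2 && (#|exp_set 2| <= r)%N) * 'C(#|exp_set 1|, r - #|exp_set 2|))%N.
Proof.
case m_le2: exp_le2; last first.
  by apply/eqP; rewrite cards_eq0; apply/eqP/setP => h; rewrite !inE mesym1_factorE m_le2 andbF.
rewrite -card_sets_between; last first.
  by rewrite -setI_eq0; apply/eqP/setP => i; rewrite !inE; case: (m i) => [|[|[|k]]].
by congr #|pred_of_set _|; apply/setP => h; rewrite !inE mesym1_factorE m_le2.
Qed.

Lemma mdeg_mesym1_factor h :
  mesym1_factor h -> mdeg m = (#|h| + #|mesym1_cofactor h|)%N.
Proof.
move=> m_h; have /eqP <- : (mesym1 h + mesym1 (mesym1_cofactor h) == m)%MM.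
  by rewrite mesym1D_eq m_h eqxx.
by rewrite mdegD !mdeg_mesym1.
Qed.

Lemma mcoeff_mesymM (R : nzRingType) r s :
  mcoeff m (mesym n R r * mesym n R s) =
  (((r + s)%N == mdeg m) * ((exp_le2 && (#|exp_set 2| <= r)%N) * 'C(#|exp_set 1|, r - #|exp_set 2|)))%:R.
Proof.
rewrite -card_mesym1_factor !mesymE big_distrlr /= raddf_sum -sum1dep_card big_distrr /=.
rewrite natr_sum big_mkcond [in RHS]big_mkcond /=; apply: eq_bigr => h1 _.
rewrite raddf_sum /= (eq_bigr (fun h2 => (mesym1 h1 + mesym1 h2 == m)%MM%:R)) => [|h2 _]; last first.
  by rewrite -mpolyXD mcoeffX.
case: eqP => //= <-; case m_h1: (mesym1_factor h1); last first.
  by rewrite big1 // => h2 _; rewrite mesym1D_eq m_h1.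
rewrite big_mkcond (bigD1 (mesym1_cofactor h1)) //= big1 => [|h2 /negbTE h2_ne]; last first.
  by rewrite mesym1D_eq m_h1 h2_ne if_same.
by rewrite mesym1D_eq m_h1 eqxx addr0 (mdeg_mesym1_factor m_h1) eqn_add2l muln1 eq_sym; case: eqP.
Qed.

End ExponentClasses.

Section TupleMonomials.
Variables (n N : nat) (p : nat -> nat).
Implicit Types (b : N.-tuple 'I_n) (m : 'X_{1..n}).

Definition tuple_mnm b : 'X_{1..n} := (\sum_(j < N) U_(tnth b j) *+ p j)%MM.

Lemma tuple_mnm_tnth b j : uniq b -> tuple_mnm b (tnth b j) = p j.
Proof.
move=> /tuple_uniqP b_inj; rewrite /tuple_mnm mnm_sumE (bigD1 j) //= mulmnE mnm1E eqxx mul1n.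
rewrite big1 ?addn0 // => k kj; rewrite mulmnE mnm1E.
by case: eqP => [/b_inj/eqP|]; rewrite ?(negbTE kj).
Qed.

Lemma tuple_mnm_notin b i : i \notin b -> tuple_mnm b i = 0%N.
Proof.
move=> ib; rewrite /tuple_mnm mnm_sumE big1 // => j _; rewrite mulmnE mnm1E.
by case: eqP => // bji; rewrite -bji mem_tnth in ib.
Qed.

Lemma mdeg_tuple_mnm b : mdeg (tuple_mnm b) = (\sum_(j < N) p j)%N.
Proof. by rewrite mdeg_sum; apply: eq_bigr => j _; rewrite mdegMn mdeg1 mul1n. Qed.

Lemma map_mnm_mkseqP b m :
  reflect (forall j : 'I_N, m (tnth b j) = p j) (map (fun i => m i) b == mkseq p N).
Proof.
rewrite -{1}(map_tnth_enum b) -map_comp /mkseq -val_enum_ord -map_comp.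
apply: (iffP eqP) => [/eq_in_map mbp j | mbp]; first exact: mbp (mem_enum _ j).
by apply/eq_in_map => j _; apply: mbp.
Qed.

(* Agreement on [b] and equal degrees force [m] to vanish off [b]. *)
Lemma tuple_mnm_eq b m : uniq b ->
  (tuple_mnm b == m) = (mdeg m == \sum_(j < N) p j)%N && (map (fun i => m i) b == mkseq p N).
Proof.
move=> b_uniq; apply/eqP/andP => [<- | [/eqP deg_m /map_mnm_mkseqP mbp]].
  by rewrite mdeg_tuple_mnm; split=> //; apply/map_mnm_mkseqP => j; rewrite tuple_mnm_tnth.
have le_bm : (tuple_mnm b <= m)%MM.
  apply/mnm_lepP => i; have [/tnthP[j ->] | ib] := boolP (i \in b).
    by rewrite tuple_mnm_tnth // mbp.
  by rewrite tuple_mnm_notin.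
have /eqP : mdeg (m - tuple_mnm b) = 0%N.
  by apply/eqP; rewrite -(eqn_add2r (mdeg (tuple_mnm b))) -mdegD submK // mdeg_tuple_mnm deg_m.
by rewrite mdeg_eq0 => /eqP m_b; rewrite -[m](submK le_bm) m_b add0m.
Qed.

Lemma mcoeff_sum_uniq_tuple (R : nzRingType) m K : all (fun v => v < K)%N (mkseq p N) ->
  mcoeff m (\sum_(b : N.-tuple 'I_n | uniq b) \prod_(j < N) 'X_(tnth b j) ^+ p j : {mpoly R[n]}) =
  ((mdeg m == sumn (mkseq p N)) *
     \prod_(v < K) #|exp_set m v| ^_ count_mem (v : nat) (mkseq p N))%:R.
Proof.
move=> pK; have -> : sumn (mkseq p N) = (\sum_(j < N) p j)%N.
  by rewrite sumnE big_map -(big_mkord xpredT) /index_iota subn0.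
rewrite raddf_sum /= (eq_bigr (fun b => (tuple_mnm b == m : nat)%:R)) => [|b _]; last first.
  by rewrite mprodXnE mcoeffX.
have -> : (\prod_(v < K) #|exp_set m v| ^_ count_mem (v : nat) (mkseq p N))%N =
    #|uniq_tuples_on (fun i => m i) N setT (mkseq p N)|.
  rewrite (card_uniq_tuples_on _ _ (size_mkseq p N) pK); apply: eq_bigr => v _.
  by congr (_ ^_ _); apply: eq_card => i; rewrite !inE.
rewrite -natr_sum -sum1dep_card big_distrr /= big_mkcond [in RHS]big_mkcond /=.
congr _%:R; apply: eq_bigr => b _; rewrite /=.
have -> : all (mem setT) b by apply/allP => i; rewrite inE.
by case: ifP => // b_uniq; rewrite tuple_mnm_eq // muln1 /=; case: (_ == _); case: (_ == _).
Qed.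

End TupleMonomials.

Definition block_exps (a b j : nat) : nat :=
  (if j < a then 2 else if j < a + b then 1 else 0)%N.

Lemma mkseq_block_exps a b c N : N = (a + b + c)%N ->
  mkseq (block_exps a b) N = nseq a 2%N ++ nseq b 1%N ++ nseq c 0%N.
Proof.
move=> ->; apply: (@eq_from_nth _ 0%N) => [|j]; first by rewrite size_mkseq !size_cat !size_nseq addnA.
rewrite size_mkseq => jN; rewrite nth_mkseq // /block_exps !nth_cat !size_nseq !nth_nseq.
by do !case: ltnP => ?; lia.
Qed.

Lemma block_exps_lt3 a b N : all (fun v => v < 3)%N (mkseq (block_exps a b) N).
Proof. by apply/allP => v /mapP[j _ ->]; rewrite /block_exps; case: ifP => //; case: ifP. Qed.

Lemma prod_ffact_count_blocks (k : nat -> nat) a b c :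
  (\prod_(v < 3) k v ^_ count_mem (v : nat) (nseq a 2 ++ nseq b 1 ++ nseq c 0))%N =
  (k 2 ^_ a * k 1 ^_ b * k 0 ^_ c)%N.
Proof. rewrite !big_ord_recr big_ord0 /= !count_cat !count_nseq /= !mul0n !mul1n !add0n !addn0; ring. Qed.

Lemma mcoeff_Mpoly m2 m1 n (m : 'X_{1..n}) : (0 < m2)%N ->
  mcoeff m (Mpoly m2 m1 n) =
    ((mdeg m == 2 * m2 + m1)%N * (#|exp_set m 2| ^_ m2 * #|exp_set m 1| ^_ m1 * #|exp_set m 0|))%:R
  - ((mdeg m == 2 * m2 + m1)%N * (#|exp_set m 2| ^_ (m2 - 1) * #|exp_set m 1| ^_ (m1 + 2)))%:R.
Proof.
move=> m2_gt0; rewrite /Mpoly.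
have -> : \sum_(b : (m1 + m2 + 1).-tuple 'I_n | uniq b)
      \prod_(j < m1 + m2 + 1) 'X_(tnth b j) ^+ (if (j < m2 - 1)%N then 2 else 1) =
    \sum_(b : (m1 + m2 + 1).-tuple 'I_n | uniq b)
      \prod_(j < m1 + m2 + 1) 'X_(tnth b j) ^+ block_exps (m2 - 1) (m1 + 2) j :> {mpoly rat[n]}.
  apply: eq_bigr => b _; apply: eq_bigr => j _; congr (_ ^+ _).
  have jN := ltn_ord j.
  by rewrite /block_exps; case: ifP => // _; rewrite ifT //; lia.
rewrite mcoeffB !(mcoeff_sum_uniq_tuple _ _ (block_exps_lt3 _ _ _)).
rewrite (@mkseq_block_exps m2 m1 1) ?(@mkseq_block_exps (m2 - 1) (m1 + 2) 0); try lia.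
rewrite !(prod_ffact_count_blocks (fun v => #|exp_set m v|)) !sumn_cat !sumn_nseq ffactn1 ffactn0 muln1.
have -> : (2 * (m2 - 1) + (1 * (m1 + 2) + 0 * 0) = 2 * m2 + m1)%N by lia.
by rewrite mul1n addn0 muln1.
Qed.

Lemma mcoeff_sum_alt_c_ee n M q (m : 'X_{1..n}) :
  mcoeff m (\sum_(i < q.+1) ((-1) ^+ i * c M i) *: (e n (q - i) * e n (q + M + i))) =
  ((mdeg m == 2 * q + M)%N && exp_le2 m && (#|exp_set m 2| == q))%:R.
Proof.
have deg_i (i : 'I_q.+1) : (q - i + (q + M + i) = 2 * q + M)%N by have := ltn_ord i; lia.
rewrite raddf_sum /=; under eq_bigr => i _ do rewrite mcoeffZ mcoeff_mesymM deg_i eq_sym.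
case: eqP => [deg_m | _]; last by rewrite big1 // => i _; rewrite mul0n mulr0.
case m_le2: (exp_le2 m); last by rewrite big1 // => i _; rewrite mul0n mulr0.
rewrite -(@sum_alt_c_binom_trunc M q _ #|exp_set m 1|) -?mdeg_exp_le2 //.
by apply: eq_bigr => i _; rewrite mul1n.
Qed.

Lemma mcoeff_Mpoly_exp_sets n m2 m1 (m : 'X_{1..n}) : (0 < m2)%N -> mdeg m = (2 * m2 + m1)%N ->
  mcoeff m (Mpoly m2 m1 n) =
    (m2`! * m1`!)%:R * (n%:R - m1%:R - m2%:R) * (exp_le2 m && (#|exp_set m 2| == m2))%:R
  - ((m2 - 1)`! * (m1 + 2)`!)%:R * (exp_le2 m && (#|exp_set m 2| == (m2 - 1)%N))%:R.
Proof.
move=> m2_gt0 deg_m; rewrite mcoeff_Mpoly // deg_m eqxx !mul1n ffact_exp_sets //.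
rewrite ffact_exp_sets; last by rewrite deg_m; lia.
case m_le2: (exp_le2 m) => /=; last by rewrite !mul0n !mulr0 subrr.
move: (card_exp_le2 m_le2) (mdeg_exp_le2 m_le2); rewrite deg_m.
set K := #|exp_set m 2|; set J := #|exp_set m 1|; set Z := #|exp_set m 0|.
move=> n_eq deg_eq; have [K2 | K_ne] := eqVneq K m2; last first.
  by rewrite !natrM /=; ring.
have -> : (K == m2 - 1)%N = false by apply/negbTE/eqP; lia.
have -> : (n%:R : rat) = (Z + J + K)%:R by congr _%:R.
have -> : J = m1 by lia.
by rewrite K2 /= !natrD !natrM; ring.
Qed.

Theorem lemma3p5 (n m2 m1 : nat) (hn : (1 <= n)%N) (hm2 : (1 <= m2)%N) :
  Mpoly m2 m1 n =
    ((m2`! * m1`!)%:R * (n%:R - m1%:R - m2%:R) : rat) *: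
      (\sum_(i < m2.+1) (((-1) ^+ i * c m1 i : rat) *: (e n (m2 - i) * e n (m2 + m1 + i))))
  - (((m2 - 1)`! * (m1 + 2)`!)%:R : rat) *:
      (\sum_(i < m2) (((-1) ^+ i * d m1 i : rat) *: (e n (m2 - 1 - i) * e n (m2 + m1 + 1 + i)))).
Proof.
have -> : \sum_(i < m2) (((-1) ^+ i * d m1 i : rat) *: (e n (m2 - 1 - i) * e n (m2 + m1 + 1 + i))) =
    \sum_(i < (m2 - 1).+1) ((-1) ^+ i * c (m1 + 2) i) *: (e n (m2 - 1 - i) * e n (m2 - 1 + (m1 + 2) + i)).
  case: m2 hm2 => // m2 _; rewrite subn1 /=; apply: eq_bigr => i _.
  by rewrite d_c; congr (_ *: (_ * e n _)); lia.
apply/mpolyP => m; rewrite [RHS]mcoeffB !mcoeffZ !mcoeff_sum_alt_c_ee.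
have -> : (2 * (m2 - 1) + (m1 + 2) = 2 * m2 + m1)%N by lia.
have [deg_m | deg_ne] := eqVneq (mdeg m) (2 * m2 + m1)%N.
  by rewrite mcoeff_Mpoly_exp_sets.
by rewrite mcoeff_Mpoly // (negbTE deg_ne) !mul0n !mulr0 subrr.
Qed.
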